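(* Let $n\ge 0$ and let $R$ be a local algebra of $\mathbb C$-dimension $n+2$. If $R$ is not isomorphic to $B_n=\mathbb C[S_1,\ldots,S_{n+1}]/(S_iS_j\mid i,j=1,\ldots,n+1)$, then $R$ is an $n$-factor.
   Context: A local algebra means a finite-dimensional commutative associative unital $\mathbb C$-algebra with a unique maximal ideal $\mathfrak m_R$ and $R/\mathfrak m_R\cong\mathbb C$. An $n$-factor is an algebra of the form $\mathbb C[S_1,\ldots,S_n]/I$ (for some ideal $I$) in which the images of $S_1,\ldots,S_n$ are linearly independent over $\mathbb C$; equivalently, an algebra generated by $n$ linearly independent elements. *)

From HB Require Import structures.
From mathcomp Require Import all_boot all_order all_algebra all_field.
Set Implicit Arguments. Unset Strict Implicit. Unset Printing Implicit Defensive.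
Import GRing.Theory Num.Theory.
Local Open Scope ring_scope.

Definition is_ideal (F : fieldType) (A : falgType F) (I : {vspace A}) : Prop :=
  forall a x : A, x \in I -> a * x \in I.

Definition is_proper_ideal (F : fieldType) (A : falgType F) (I : {vspace A}) : Prop :=
  is_ideal I /\ (1 \notin I).

Definition is_maximal_ideal (F : fieldType) (A : falgType F) (I : {vspace A}) : Prop :=
  is_proper_ideal I /\
  forall J : {vspace A}, is_proper_ideal J -> (I <= J)%VS -> J = I.

(* Local algebra: a unique maximal ideal m, and R/m ≅ F via the structure map,
   i.e. every x is congruent mod m to a scalar. *)
Definition is_local_algebra (F : fieldType) (A : falgType F) : Prop :=
  exists m : {vspace A},
    [/\ is_maximal_ideal m,
        (forall J : {vspace A}, is_maximal_ideal J -> J = m)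
      & (forall x : A, exists c : F, x - c%:A \in m)].

Definition is_n_factor (F : fieldType) (A : falgType F) (n : nat) : Prop :=
  exists X : n.-tuple A, free X /\ agenv <<X>>%VS = fullv.

(* A ≅ B_n = F[S_1..S_{n+1}]/(S_i S_j): an algebra isomorphism B_n -> A is,
   by the universal property of the presentation, given by images s_i with
   s_i s_j = 0, and it is bijective iff the image (1, s_1, ..., s_{n+1}) of the
   monomial basis of B_n is a basis of A. *)
Definition isom_to_Bn (F : fieldType) (A : falgType F) (n : nat) : Prop :=
  exists s : (n.+1).-tuple A,
    basis_of fullv (1 :: (s : seq A)) /\
    forall i j : 'I_n.+1, tnth s i * tnth s j = 0.

(* Write R = C·1 ⊕ m with dim m = n + 1.  If all products of elements of m
   vanish, then 1 followed by a basis of m exhibits R as B_n.  Otherwise, as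
   2 is invertible, polarisation gives x ∈ m with x² ≠ 0.  Since 1 - c x is a
   unit for every scalar c, x and x² are linearly independent, so x together
   with a basis of a complement of span(x, x²) in m is a family of n linearly
   independent elements; the algebra it generates contains x², hence m, hence
   R. *)
From HB Require Import structures.
From mathcomp Require Import all_boot all_order all_algebra all_field.
From Stdlib Require Import Classical.
From mathcomp Require Import zify.
Set Implicit Arguments. Unset Strict Implicit. Unset Printing Implicit Defensive.
Import GRing.Theory Num.Theory.
Local Open Scope ring_scope.

Lemma proper_ideal_sub_maximal (F : fieldType) (A : falgType F) (I : {vspace A}) :
  is_proper_ideal I -> exists J, is_maximal_ideal J /\ (I <= J)%VS.
Proof.
have [k] := ubnP (\dim {:A} - \dim I); elim: k I => // k IH I codim_lt I_proper.
have [I_max|I_not_max] := classic (is_maximal_ideal I).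
  by exists I; split; rewrite ?subvv.
have [J [J_proper IJ JI]] : exists J, [/\ is_proper_ideal J, (I <= J)%VS & J <> I].
  apply: NNPP => no_J; apply: I_not_max; split=> // J J_proper IJ.
  by apply: NNPP => JI; apply: no_J; exists J.
have ltIJ : (\dim I < \dim J)%N.
  rewrite ltn_neqAle dimvS // andbT; apply: contra_notN JI => /eqP dimJI.
  by apply/eqP; rewrite eq_sym eqEdim IJ dimJI leqnn.
have leJA := dimvS (subvf J).
have [K [K_max JK]] := IH J ltac:(lia) J_proper.
by exists K; split=> //; apply: subv_trans JK.
Qed.

Section LocalAlgebra.

Variables (F : fieldType) (A : falgType F).
Hypothesis Acomm : forall x y : A, x * y = y * x.
Variable m : {vspace A}.
Hypothesis m_max : is_maximal_ideal m.
Hypothesis m_unique : forall J : {vspace A}, is_maximal_ideal J -> J = m.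

Lemma notin_maximal_invertible (u : A) : u \notin m -> exists v, u * v = 1.
Proof.
move=> um; pose I := (amull u @: fullv)%VS.
have amull_in_I z : u * z \in I.
  by have := memv_img (amull u) (memvf z); rewrite lfunE.
have I_ideal : is_ideal I.
  by move=> a y /memv_imgP [z _ ->]; rewrite lfunE /= mulrA (Acomm a u) -mulrA amull_in_I.
have [/memv_imgP [v _ ->]|I1] := boolP (1 \in I); first by exists v; rewrite lfunE.
have [J [J_max IJ]] := proper_ideal_sub_maximal (conj I_ideal I1).
rewrite (m_unique J_max) in IJ.
by case/negP: um; rewrite -[u]mulr1; apply: (subvP IJ).
Qed.

Lemma free_sqr_maximal (x : A) : x \in m -> x * x != 0 -> free [:: x; x * x].
Proof.
move=> xm xx0; have x0 : x != 0 by apply: contraNneq xx0 => ->; rewrite mul0r.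
rewrite free_cons span_seq1 seq1_free xx0 andbT; apply/vlineP => -[c xE].
have [[m_ideal m1] _] := m_max.
have unit_notin : 1 - c *: x \notin m.
  apply: contra m1 => h; rewrite -(subrK (c *: x) 1) memvD // memvZ //.
have [v uv] := notin_maximal_invertible unit_notin.
have annihil : x * (1 - c *: x) = 0 by rewrite mulrBr mulr1 -scalerAr -xE subrr.
by case/eqP: x0; rewrite -[x]mulr1 -uv mulrA annihil mul0r.
Qed.

End LocalAlgebra.

Lemma local_algebra_decomposition (F : fieldType) (A : falgType F) (m : {vspace A}) :
  1 \notin m -> (forall x : A, exists c : F, x - c%:A \in m) ->
  (<[1]> + m)%VS = fullv /\ (\dim m).+1 = \dim {:A}.
Proof.
move=> m1 mcodim1.
have sum_full : (<[1]> + m)%VS = fullv.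
  apply/eqP; rewrite eqEsubv subvf; apply/subvP => y _.
  have [c yc] := mcodim1 y.
  by rewrite -(subrK c%:A y) addrC memv_add ?memvZ ?memv_line.
split=> //; have disj : (<[1]> :&: m = 0)%VS.
  apply/eqP; rewrite -subv0; apply/subvP => y /memv_capP [/vlineP [c ->] c1m].
  rewrite memv0 scaler_eq0 oner_eq0 orbF; apply: contraLR c1m => c0.
  by apply: contra m1 => c1m; rewrite -[1](scalerK c0) memvZ.
by have := dimv_disjoint_sum disj; rewrite sum_full dim_vline oner_neq0.
Qed.

Lemma isom_to_Bn_of_mul_eq0 (F : fieldType) (A : falgType F) (n : nat)
    (m : {vspace A}) :
  1 \notin m -> \dim m = n.+1 -> \dim {:A} = n.+2 ->
  (forall a b, a \in m -> b \in m -> a * b = 0) -> isom_to_Bn A n.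
Proof.
move=> m1 dim_m dim_A m2_0.
have size_b : size (vbasis m) == n.+1 by rewrite size_tuple dim_m.
exists (Tuple size_b); split.
  rewrite basisEfree /= free_cons (span_basis (vbasisP m)) m1.
  by rewrite (basis_free (vbasisP m)) subvf dim_A /= (eqP size_b).
by move=> i j; apply: m2_0; apply: vbasis_mem; apply: (mem_tnth _ (Tuple size_b)).
Qed.

Lemma exists_sqr_neq0_of_mul_neq0 (F : fieldType) (A : falgType F) (m : {vspace A}) :
  (forall x y : A, x * y = y * x) -> 2%:R != 0 :> F ->
  (exists2 a, a \in m & exists2 b, b \in m & a * b != 0) ->
  exists2 x, x \in m & x * x != 0.
Proof.
move=> Acomm two0 [a am [b bm ab0]].
have [aa0|] := eqVneq (a * a) 0; last by exists a.
have [bb0|] := eqVneq (b * b) 0; last by exists b.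
exists (a + b); first exact: memvD.
rewrite mulrDl !mulrDr aa0 bb0 add0r addr0 (Acomm b a) -mulr2n -scaler_nat.
by rewrite scaler_eq0 negb_or two0.
Qed.

Lemma n_factor_of_free_sqr (F : fieldType) (A : falgType F) (n : nat)
    (m : {vspace A}) (x : A) :
  (<[1]> + m)%VS = fullv -> \dim m = n.+1 ->
  x \in m -> x * x \in m -> free [:: x; x * x] -> is_n_factor A n.
Proof.
move=> sum_full dim_m xm xxm free_x.
pose U := span [:: x; x * x].
have Um : (U <= m)%VS by apply/span_subvP => y; rewrite !inE => /orP [] /eqP ->.
pose C := (m :\: U)%VS.
have dim_C : n = (\dim C).+1.
  have := dimv_cap_compl m U; rewrite (capv_idPr Um) (eqnP free_x) dim_m -/C /=; lia.
have size_gen : size (x :: vbasis C) == n by rewrite /= size_tuple dim_C.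
exists (Tuple size_gen); split.
  rewrite /= free_cons (span_basis (vbasisP C)) (basis_free (vbasisP C)) andbT.
  apply: contraTN (free_not0 free_x (mem_head _ _)) => xC.
  by rewrite -memv0 -(capv_diff m U) memv_cap xC memv_span ?mem_head.
set S := agenv _.
have xS : x \in S by apply: (subvP (sub_agenv _)); rewrite memv_span ?mem_head.
have xxS : x * x \in S by rewrite /S -agenvM memv_mul.
apply/eqP; rewrite eqEsubv subvf -sum_full subv_add sub1_agenv /=.
rewrite -(addv_diff_cap m U) subv_add (capv_idPr Um); apply/andP; split.
  rewrite -/C -[X in (X <= _)%VS](span_basis (vbasisP C)); apply: subv_trans (sub_agenv _).
  by apply/span_subvP => y yC; rewrite memv_span // inE yC orbT.
by apply/span_subvP => y; rewrite !inE => /orP [] /eqP ->.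
Qed.

Theorem lemma3 (F : numClosedFieldType) (A : falgType F) (n : nat)
  (Acomm : forall x y : A, x * y = y * x)
  (Aloc : is_local_algebra A)
  (Adim : \dim (fullv : {vspace A}) = n.+2)
  (notBn : ~ isom_to_Bn A n) :
  is_n_factor A n.
Proof.
have [m [m_max m_unique mcodim1]] := Aloc.
have [[m_ideal m1] _] := m_max.
have [sum_full dim_m] := local_algebra_decomposition m1 mcodim1.
move: dim_m; rewrite Adim => -[dim_m].
have m2_neq0 : exists2 a, a \in m & exists2 b, b \in m & a * b != 0.
  apply: NNPP => m2_0; apply/notBn/(isom_to_Bn_of_mul_eq0 m1) => // a b am bm.
  by apply/eqP/negPn/negP => ab0; apply: m2_0; exists a => //; exists b.
have two0 : 2%:R != 0 :> F by rewrite pnatr_eq0.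
have [x xm xx0] := exists_sqr_neq0_of_mul_neq0 Acomm two0 m2_neq0.
have free_x := free_sqr_maximal Acomm m_max m_unique xm xx0.
by have := n_factor_of_free_sqr sum_full dim_m xm (m_ideal x x xm) free_x.
Qed.
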